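(* Let $\kappa,\kappa'$ be two cardinals such that $\kappa\geq 2^{\kappa'}$, and assume $\kappa$ is infinite. Then every functor ${\sf Sets}^{\leq\kappa}_{\neq\emptyset}\to{\sf Sets}^{\leq\kappa'}_{\neq\emptyset}$ and every functor ${\sf Sets}^{\leq\kappa}_{*}\to{\sf Sets}^{\leq\kappa'}_{*}$ is isomorphic to a constant functor.
   Context: For a cardinal $\lambda$, ${\sf Sets}^{\leq\lambda}_{\neq\emptyset}$ denotes the category of non-empty sets of cardinality $\leq\lambda$ with all maps, and ${\sf Sets}^{\leq\lambda}_{*}$ the category of pointed sets of cardinality $\leq\lambda$ with base-point preserving maps. *)

From mathcomp Require Import ssreflect ssrfun ssrbool.
Set Implicit Arguments. Unset Strict Implicit. Unset Printing Implicit Defensive.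

(* A cardinal lambda is represented by a type K of cardinality lambda;
   "a set X has cardinality <= lambda" means there is an injection X -> K. *)

Record NESet (K : Type) := {
  ne_car :> Type;
  ne_small : exists f : ne_car -> K, injective f;
  ne_nonempty : inhabited ne_car }.

Record NEFunctor (K K' : Type) := {
  nef_obj : NESet K -> NESet K';
  nef_map : forall X Y : NESet K, (X -> Y) -> nef_obj X -> nef_obj Y;
  nef_id : forall (X : NESet K) (x : nef_obj X), nef_map (fun a : X => a) x = x;
  nef_comp : forall (X Y Z : NESet K) (f : X -> Y) (g : Y -> Z) (x : nef_obj X),
      nef_map (g \o f) x = nef_map g (nef_map f x) }.

Arguments nef_map {K K'} n {X Y} _ _.
Definition NE_iso_const (K K' : Type) (F : NEFunctor K K') : Prop :=
  exists C : NESet K', exists alpha : forall X : NESet K, nef_obj F X -> C,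
    (forall X, bijective (alpha X)) /\
    (forall (X Y : NESet K) (f : X -> Y) (x : nef_obj F X),
        alpha Y (nef_map F f x) = alpha X x).

Record PtSet (K : Type) := {
  pt_car :> Type;
  pt_base : pt_car;
  pt_small : exists f : pt_car -> K, injective f }.

Definition pt_hom (K : Type) (X Y : PtSet K) : Type :=
  { f : X -> Y | f (pt_base X) = pt_base Y }.

Definition pt_id (K : Type) (X : PtSet K) : pt_hom X X :=
  exist _ (fun a : X => a) erefl.

Lemma pt_comp_proof (K : Type) (X Y Z : PtSet K) (f : pt_hom X Y) (g : pt_hom Y Z) :
  (sval g \o sval f) (pt_base X) = pt_base Z.
Proof. by case: f => f hf; case: g => g hg /=; rewrite hf hg. Qed.

Definition pt_comp (K : Type) (X Y Z : PtSet K) (f : pt_hom X Y) (g : pt_hom Y Z)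
  : pt_hom X Z := exist _ (sval g \o sval f) (pt_comp_proof f g).

Record PtFunctor (K K' : Type) := {
  pf_obj : PtSet K -> PtSet K';
  pf_map : forall X Y : PtSet K, pt_hom X Y -> pt_hom (pf_obj X) (pf_obj Y);
  pf_id : forall (X : PtSet K) (x : pf_obj X), sval (pf_map (pt_id X)) x = x;
  pf_comp : forall (X Y Z : PtSet K) (f : pt_hom X Y) (g : pt_hom Y Z) (x : pf_obj X),
      sval (pf_map (pt_comp f g)) x = sval (pf_map g) (sval (pf_map f) x) }.

Arguments pf_map {K K'} p {X Y} _.
Definition Pt_iso_const (K K' : Type) (F : PtFunctor K K') : Prop :=
  exists C : PtSet K', exists alpha : forall X : PtSet K, pt_hom (pf_obj F X) C,
    (forall X, bijective (sval (alpha X))) /\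
    (forall (X Y : PtSet K) (f : pt_hom X Y) (x : pf_obj F X),
        sval (alpha Y) (sval (pf_map F f) x) = sval (alpha X) x).

(* Let 1 be a one-point object. A functor F is isomorphic to the constant
   functor at F 1 as soon as F sends every constant self-map c : X -> X to the
   identity, for then F (X -> 1) and F (1 -> X) are mutually inverse.
   To see F c = id when c has value x0, embed X into Y := X * 2^K' as 2^K'
   copies s_p glued at x0, with retractions r_p such that r_p s_p = id and
   r_p s_q = c for p <> q. If F c u <> u, then p |-> F s_p u is injective,
   so 2^K' embeds into F Y, hence into K', contradicting Cantor. Y is still
   small because K * K embeds into K for infinite K (Hessenberg). *)

From mathcomp Require Import ssreflect ssrfun ssrbool eqtype choice.
From mathcomp Require Import boolp classical_sets.
Set Implicit Arguments. Unset Strict Implicit. Unset Printing Implicit Defensive.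
Local Open Scope classical_set_scope.

Definition embeds (A B : Type) := exists f : A -> B, injective f.

Lemma Zorn_bigcup_nonempty (T : Type) (P : set (set T)) (X0 : set T) : P X0 ->
  (forall F, F `<=` P -> F !=set0 -> total_on F subset -> P (\bigcup_(X in F) X)) ->
  exists2 A, P A & forall B, P B -> A `<=` B -> B `<=` A.
Proof.
move=> PX0 Pch; pose R (A B : {X | P X}) := `[< sval A `<=` sval B >].
have [||C Cch|[A PA] Amax] := ZL_preorder (exist _ X0 PX0) (R := R).
- by move=> ?; apply/asboolP.
- by move=> ? ? ? /asboolP AB /asboolP BC; apply/asboolP; exact: subset_trans BC.
- have [[X0' CX0']|C0] := pselect (C !=set0); last first.
    by exists (exist _ X0 PX0) => X CX; case: C0; exists X.
  have PU : P (\bigcup_(X in sval @` C) X).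
    apply: Pch; first by move=> _ [X _ <-]; exact: svalP.
      by exists (sval X0'), X0'.
    move=> _ _ [X CX <-] [Y CY <-].
    by have [/asboolP|/asboolP] := Cch X Y CX CY; [left|right].
  exists (exist _ _ PU) => X CX; apply/asboolP => x Xx.
  by exists (sval X) => //; exists X.
- exists A => // B PB AB.
  by have /asboolP := Amax (exist _ B PB) (introT (asboolP _) AB).
Qed.

Lemma chain_bigcup_pairwise (T : Type) (F : set (set T)) (Q : T -> T -> Prop) :
  total_on F subset -> (forall X, F X -> forall a b, X a -> X b -> Q a b) ->
  forall a b, (\bigcup_(X in F) X) a -> (\bigcup_(X in F) X) b -> Q a b.
Proof.
move=> Fch FQ a b [X FX Xa] [Y FY Yb].
have [XY|YX] := Fch X Y FX FY; first by apply: (FQ Y) => //; exact: XY.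
by apply: (FQ X) => //; exact: YX.
Qed.

Section Graphs.
Variables T U : Type.
Implicit Types (A : set T) (B : set U) (G : set (T * U)) (f : T -> U).

Definition set_embedding A B f :=
  (forall x, A x -> B (f x)) /\ (forall x y, A x -> A y -> f x = f y -> x = y).

Definition functional_graph G := forall p q, G p -> G q -> p.1 = q.1 -> p.2 = q.2.
Definition injective_graph G := forall p q, G p -> G q -> p.2 = q.2 -> p.1 = q.1.

Definition partial_injection A B G :=
  [/\ G `<=` A `*` B, functional_graph G & injective_graph G].

Definition injection_graph A B G :=
  partial_injection A B G /\ forall x, A x -> exists y, G (x, y).

Definition converse G : set (U * T) := [set p | G (p.2, p.1)].

Lemma functional_graph_fun (d : T -> U) G :
  functional_graph G -> exists f, forall x y, G (x, y) -> f x = y.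
Proof.
move=> Gfun.
exists (fun x =>
  if pselect (exists y, G (x, y)) is left e then sval (cid e) else d x).
move=> x y Gxy; case: pselect => [e|[]]; last by exists y.
by case: (cid e) => y' /= Gxy'; exact: (Gfun (x, y') (x, y)).
Qed.

Lemma injection_graph_embedding (d : T -> U) A B G : injection_graph A B G ->
  exists2 f, set_embedding A B f & forall x y, G (x, y) -> f x = y.
Proof.
move=> [[GAB Gfun Ginj] Gtot]; have [f fG] := functional_graph_fun d Gfun.
have Gf x : A x -> G (x, f x) by move=> /Gtot[y Gxy]; rewrite (fG _ _ Gxy).
exists f => //; split; first by move=> x /Gf /GAB[].
by move=> x x' /Gf Gx /Gf Gx' fxx'; exact: (Ginj _ _ Gx Gx').
Qed.

Lemma graph_injection A B f :
  set_embedding A B f -> injection_graph A B [set (x, f x) | x in A].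
Proof.
move=> [fAB fI]; split; last by move=> x Ax; exists (f x), x.
split.
- by move=> _ [x Ax <-]; split=> //; exact: fAB.
- by move=> _ _ [x Ax <-] [y Ay <-] /= ->.
- by move=> _ _ [x Ax <-] [y Ay <-] /=; exact: fI.
Qed.

End Graphs.

Lemma partial_injection_converse (T U : Type) (A : set T) (B : set U)
    (G : set (T * U)) :
  partial_injection A B G -> partial_injection B A (converse G).
Proof.
case=> GAB Gfun Ginj; split.
- by move=> [y x] /GAB[].
- by move=> [y x] [y' x'] /= Gp Gq; exact: (Ginj (x, y) (x', y')).
- by move=> [y x] [y' x'] /= Gp Gq; exact: (Gfun (x, y) (x', y')).
Qed.

Lemma set_embedding_linv (T U : Type) (d : U -> T) (A : set T) (B : set U)
    (f : T -> U) :
  set_embedding A B f -> exists g, forall x, A x -> g (f x) = x.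
Proof.
move=> [_ fI].
have [|g gG] := functional_graph_fun d (G := [set (f x, x) | x in A]).
  by move=> _ _ [x Ax <-] [y Ay <-] /=; exact: fI.
by exists g => x Ax; apply: gG; exists x.
Qed.

Lemma set_embedding_total (T : Type) (A B : set T) :
  (exists f, set_embedding A B f) \/ (exists g, set_embedding B A g).
Proof.
have [|G [GI Gmax]] := Zorn_bigcup (P := partial_injection A B).
  move=> F FI Fch; split.
  - by move=> p [X /FI[XAB _ _] /XAB].
  - by apply: chain_bigcup_pairwise => // X /FI[].
  - by apply: chain_bigcup_pairwise => // X /FI[].
have [Atot|/existsNP[a /not_implyP[Aa /forallNP Ga]]] :=
  pselect (forall x, A x -> exists y, G (x, y)).
  by left; have [f ? _] := injection_graph_embedding id (conj GI Atot); exists f.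
have [Btot|/existsNP[b /not_implyP[Bb /forallNP Gb]]] :=
  pselect (forall y, B y -> exists x, G (x, y)).
  right; have GI' := partial_injection_converse GI.
  by have [g ? _] := injection_graph_embedding id (conj GI' Btot); exists g.
exfalso; apply: (Gmax (G `|` [set (a, b)])).
  split; first exact: subsetUl.
  by move=> /(_ (a, b) (or_intror erefl)) /Ga.
case: GI => GAB Gfun Ginj; split.
- by move=> p [/GAB //|->].
- move=> [x y] [x' y'] [Gp|[-> ->]] [Gq|[-> ->]] //= xx'.
  + exact: (Gfun (x, y) (x', y')).
  + by case: (Ga y); rewrite -xx'.
  + by case: (Ga y'); rewrite xx'.
- move=> [x y] [x' y'] [Gp|[-> ->]] [Gq|[-> ->]] //= yy'.
  + exact: (Ginj (x, y) (x', y')).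
  + by case: (Gb x); rewrite -yy'.
  + by case: (Gb x'); rewrite yy'.
Qed.

Lemma set_embedding_comp (T U V : Type) (A : set T) (B : set U) (C : set V) f g :
  set_embedding A B f -> set_embedding B C g -> set_embedding A C (g \o f).
Proof.
move=> [fAB fI] [gBC gI]; split=> [x /fAB /gBC //|x y Ax Ay /= gfxy].
by apply: fI => //; apply: gI => //; exact: fAB.
Qed.

Section SquareEmbeddings.
Variables (T : Type) (D : set T) (f : T * T -> T) (a b : T).
Hypotheses (fD : set_embedding (D `*` D) D f) (Da : D a) (Db : D b) (ab : a <> b).

Lemma set_embedding_pairs (A : set T) (e : T -> T) : set_embedding A D e ->
  set_embedding (A `*` A) D (fun p => f (e p.1, e p.2)).
Proof.
case: fD => fDD fI [eD eI]; split; first by move=> p [/eD ? /eD ?]; exact: fDD.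
have eDD u v : A u -> A v -> (D `*` D) (e u, e v) by split; exact: eD.
move=> [x y] [x' y'] [/= Ax Ay] [/= Ax' Ay'].
move=> /(fI _ _ (eDD _ _ Ax Ay) (eDD _ _ Ax' Ay')).
by case=> /(eI _ _ Ax Ax') -> /(eI _ _ Ay Ay') ->.
Qed.

Lemma set_embedding_setU (E : set T) (r : T -> T) : set_embedding E D r ->
  set_embedding (D `|` E) D (fun x => if `[< D x >] then f (x, a) else f (r x, b)).
Proof.
case: fD => fDD fI [rD rI]; split.
  move=> x DEx; case: asboolP => [Dx|nDx]; apply: fDD; split=> //.
  by case: DEx => // /rD.
move=> x y DEx DEy; have DEr z : (D `|` E) z -> ~ D z -> E z by case.
case: asboolP => [Dx|/(DEr _ DEx) Ex]; case: asboolP => [Dy|/(DEr _ DEy) Ey].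
- by move=> /(fI (x, a) (y, a) (conj Dx Da) (conj Dy Da)) [].
- by move=> /(fI (x, a) (r y, b) (conj Dx Da) (conj (rD _ Ey) Db)) [_ /ab].
- by move=> /(fI (r x, b) (y, a) (conj (rD _ Ex) Db) (conj Dy Da)) [_ /esym /ab].
- move=> /(fI (r x, b) (r y, b) (conj (rD _ Ex) Db) (conj (rD _ Ey) Db)).
  by case=> /rI ->.
Qed.

Lemma set_embedding_square_extend (E : set T) (g : T * T -> T) :
  (forall x, D x -> ~ E x) -> set_embedding ((D `|` E) `*` (D `|` E)) E g ->
  set_embedding ((D `|` E) `*` (D `|` E)) (D `|` E)
    (fun p => if `[< D p.1 /\ D p.2 >] then f p else g p).
Proof.
case: fD => fDD fI DE [gE gI]; split.
  by move=> p DEp; case: asboolP => [/fDD|_]; [left|right; exact: gE].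
move=> p q DEp DEq; case: asboolP => [Dp|_]; case: asboolP => [Dq|_].
- exact: fI.
- by move=> fpq; case: (DE _ (fDD p Dp)); rewrite fpq; exact: gE.
- by move=> gpq; case: (DE _ (fDD q Dq)); rewrite -gpq; exact: gE.
- exact: gI.
Qed.

Lemma square_embeds_of_complement (h : T -> T) :
  set_embedding (~` D) D h -> embeds (T * T) T.
Proof.
move=> hD; have := set_embedding_pairs (set_embedding_setU hD).
by rewrite setUv => -[_ mI]; eexists => p q; apply: mI.
Qed.

(* Pairs outside D * D go to h @` D, disjoint from D, through h, f and the
   embedding of D `|` h @` D into D. *)
Lemma square_embedding_extend (h : T -> T) : set_embedding D (~` D) h ->
  exists2 f', set_embedding ((D `|` h @` D) `*` (D `|` h @` D)) (D `|` h @` D) f'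
    & forall p, (D `*` D) p -> f' p = f p.
Proof.
move=> hD; have [r rh] := set_embedding_linv id hD.
have rE : set_embedding (h @` D) D r.
  by split=> [_ [x Dx <-]|_ _ [x Dx <-] [y Dy <-]]; rewrite !rh // => ->.
have hE : set_embedding D (h @` D) h by split=> [x Dx|]; [exists x|case: hD].
have DE x : D x -> ~ (h @` D) x.
  by move=> Dx [y Dy hyx]; apply: (proj1 hD y Dy); rewrite hyx.
have gE := set_embedding_comp (set_embedding_pairs (set_embedding_setU rE)) hE.
eexists; first exact: set_embedding_square_extend DE gE.
by move=> p Dp /=; rewrite asboolT.
Qed.

End SquareEmbeddings.

Section Hessenberg.
Variables (K : Type) (j : nat -> K).
Hypothesis j_inj : injective j.

Definition square_absorbing (G : set (K * K * K)) :=
  exists2 D, range j `<=` D & injection_graph (D `*` D) D G.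

Lemma square_absorbing_range : exists G, square_absorbing G.
Proof.
have [r rK] := set_embedding_linv (fun _ => 0) (A := setT) (B := setT)
  (conj (fun _ _ => I) (fun x y _ _ => @j_inj x y)).
exists [set (p, j (pickle (r p.1, r p.2))) | p in range j `*` range j].
exists (range j) => //.
apply: graph_injection; split; first by move=> p _; exists (pickle (r p.1, r p.2)).
move=> [_ _] [_ _] [/= [m _ <-] [n _ <-]] [/= [m' _ <-] [n' _ <-]].
by move=> /j_inj /(pcan_inj pickleK); rewrite /= !rK // => -[-> ->].
Qed.

Lemma square_absorbing_bigcup (F : set (set (K * K * K))) :
  F `<=` square_absorbing -> F !=set0 -> total_on F subset ->
  square_absorbing (\bigcup_(X in F) X).
Proof.
move=> Fsq [X0 FX0] Fch.
pose D := [set x | exists z, (\bigcup_(X in F) X) (x, x, z)].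
have DXD X DX : F X -> injection_graph (DX `*` DX) DX X -> DX `<=` D.
  move=> FX [_ Xtot] x DXx; have [z Xz] := Xtot (x, x) (conj DXx DXx).
  by exists z, X.
exists D.
  by have [DX jDX XI] := Fsq X0 FX0; apply: subset_trans (DXD X0 DX FX0 XI).
split; [split|].
- move=> [[x y] z] [X FX Xp]; have [DX _ XI] := Fsq X FX.
  have [[XDX _ _] _] := XI; have [[/= Dx Dy] Dz] := XDX _ Xp.
  by have XD := DXD X DX FX XI; split; [split|]; apply: XD.
- by apply: chain_bigcup_pairwise => // X /Fsq[DX _ [[]]].
- by apply: chain_bigcup_pairwise => // X /Fsq[DX _ [[]]].
- move=> [x y] [[zx Uxx] [zy Uyy]].
  have [|X FX [Xxx Xyy]] := chain_bigcup_pairwise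
    (Q := fun a b => exists2 X, F X & X a /\ X b) Fch _ Uxx Uyy.
    by move=> X FX a b Xa Xb; exists X.
  have [DX _ [[XDX _ _] Xtot]] := Fsq X FX.
  have [z Xz] := Xtot (x, y) (conj (XDX _ Xxx).1.1 (XDX _ Xyy).1.1).
  by exists z, X.
Qed.

(* Take a maximal square-absorbing graph, with domain D. If ~` D embeds into
   D then so does K; otherwise D embeds into ~` D and the graph extends to
   D `|` h @` D, against maximality. *)
Theorem Hessenberg : embeds (K * K) K.
Proof.
have [G0 G0sq] := square_absorbing_range.
have [G [D jD GI] Gmax] := Zorn_bigcup_nonempty G0sq square_absorbing_bigcup.
have [f fD fG] := injection_graph_embedding fst GI.
have jD' n : D (j n) by apply: jD; exists n.
have j01 : j 0 <> j 1 by move=> /j_inj.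
have [[h hD]|[h hD]] := set_embedding_total (~` D) D.
  exact (square_embeds_of_complement fD (jD' 0) (jD' 1) j01 hD).
have [f' f'D f'f] := square_embedding_extend fD (jD' 0) (jD' 1) j01 hD.
set D' := D `|` h @` D in f'D.
have [[GD _ _] _] := GI.
have GG' : G `<=` [set (p, f' p) | p in D' `*` D'].
  move=> [p z] Gpz; have [[Dp1 Dp2] _] := GD _ Gpz.
  by exists p; [split; left|rewrite f'f // (fG _ _ Gpz)].
have /Gmax/(_ GG') G'G : square_absorbing [set (p, f' p) | p in D' `*` D'].
  by exists D'; [move=> x /jD; left|exact: graph_injection].
have hj0 : (D' `*` D') (h (j 0), h (j 0)) by split; right; exists (j 0).
have [[/= Dhj0 _] _] := GD _ (G'G _ (ex_intro2 _ _ _ hj0 erefl)).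
by case: (proj1 hD _ (jD' 0) Dhj0).
Qed.

End Hessenberg.

Lemma Cantor (T : Type) : ~ embeds (T -> bool) T.
Proof.
move=> [g gI]; have [r rg] := set_embedding_linv (fun _ _ => true) (A := setT)
  (B := setT) (conj (fun _ _ => I) (fun p q _ _ => @gI p q)).
pose d k := ~~ r k k.
by move: (congr1 (fun p => p (g d)) (rg d I)); rewrite /d /=; case: (r _ _).
Qed.

Lemma embeds_prod (K X P : Type) :
  embeds nat K -> embeds X K -> embeds P K -> embeds (X * P) K.
Proof.
move=> [j jI] [e eI] [i iI]; have [m mI] := Hessenberg jI.
by exists (fun p => m (e p.1, i p.2)) => -[x p] [x' p'] /mI[/eI -> /iI ->].
Qed.

Lemma power_retractions_fix (T A B : Type) (s : (T -> bool) -> A -> B)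
    (r : (T -> bool) -> B -> A) (c : A -> A) (a : A) :
  embeds B T -> (forall p, r p (s p a) = a) ->
  (forall p q, p <> q -> r p (s q a) = c a) -> c a = a.
Proof.
move=> [e eI] rs rsc; apply: contra_notP (@Cantor T) => ca.
exists (fun p => e (s p a)) => p q /eI spq; apply: contra_notP ca => pq.
by rewrite -(rsc p q pq) -spq rs.
Qed.

Section Copies.
Variables (X P : Type) (x0 : X) (p0 : P).

(* The copies are glued at (x0, p0), so that copy_in and copy_out are pointed. *)
Definition copy_in (p : P) (x : X) : X * P :=
  if `[< x = x0 >] then (x0, p0) else (x, p).

Definition copy_out (p : P) (y : X * P) : X := if `[< y.2 = p >] then y.1 else x0.

Lemma copy_in_base p : copy_in p x0 = (x0, p0).
Proof. by rewrite /copy_in asboolT. Qed.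

Lemma copy_out_base p : copy_out p (x0, p0) = x0.
Proof. by rewrite /copy_out; case: asboolP. Qed.

Lemma copy_out_in p : copy_out p \o copy_in p = id.
Proof.
apply: funext => x /=; rewrite /copy_in; case: asboolP => [->|_].
  exact: copy_out_base.
by rewrite /copy_out asboolT.
Qed.

Lemma copy_out_in_neq p q : p <> q -> copy_out p \o copy_in q = fun=> x0.
Proof.
move=> pq; apply: funext => x /=; rewrite /copy_in; case: asboolP => [_|_].
  exact: copy_out_base.
by rewrite /copy_out; case: asboolP => // /esym.
Qed.

End Copies.

Lemma nef_map_const (K K' : Type) : embeds nat K -> embeds (K' -> bool) K ->
  forall (F : NEFunctor K K') (X : NESet K) (x0 : X) (u : nef_obj F X),
  nef_map F (fun=> x0) u = u.
Proof.
move=> jK pK F X x0 u; pose p0 (_ : K') := true.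
pose Y : NESet K := {| ne_car := X * (K' -> bool);
  ne_small := embeds_prod jK (ne_small X) pK; ne_nonempty := inhabits (x0, p0) |}.
apply: (@power_retractions_fix K' _ (nef_obj F Y)
  (fun p => nef_map F (copy_in x0 p0 p : X -> Y))
  (fun p => nef_map F (copy_out x0 p : Y -> X)) (nef_map F (fun=> x0))).
- exact: ne_small.
- by move=> p; rewrite -nef_comp copy_out_in nef_id.
- by move=> p q pq; rewrite -nef_comp copy_out_in_neq.
Qed.

Definition pt_const (K : Type) (X Y : PtSet K) : pt_hom X Y :=
  exist _ (fun=> pt_base Y) erefl.

Lemma pt_hom_eq (K : Type) (X Y : PtSet K) (f g : pt_hom X Y) :
  sval f = sval g -> f = g.
Proof. by case: f g => f ? [g ?] /=; exact: eq_exist. Qed.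

Lemma pf_map_const (K K' : Type) : embeds nat K -> embeds (K' -> bool) K ->
  forall (F : PtFunctor K K') (X : PtSet K) (u : pf_obj F X),
  sval (pf_map F (pt_const X X)) u = u.
Proof.
move=> jK pK F X u; pose x0 := pt_base X; pose p0 (_ : K') := true.
pose Y : PtSet K := {| pt_car := X * (K' -> bool); pt_base := (x0, p0);
  pt_small := embeds_prod jK (pt_small X) pK |}.
pose s p : pt_hom X Y := exist _ (copy_in x0 p0 p) (copy_in_base _ _ p).
pose r p : pt_hom Y X := exist _ (copy_out x0 p) (copy_out_base _ _ p).
apply: (@power_retractions_fix K' _ (pf_obj F Y)
  (fun p => sval (pf_map F (s p))) (fun p => sval (pf_map F (r p)))
  (sval (pf_map F (pt_const X X)))).
- exact: pt_small.
- move=> p; rewrite -pf_comp.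
  by rewrite (_ : pt_comp _ _ = pt_id X) ?pf_id //; apply/pt_hom_eq/copy_out_in.
- move=> p q pq; rewrite -pf_comp.
  by rewrite (_ : pt_comp _ _ = pt_const X X) //; apply/pt_hom_eq/copy_out_in_neq.
Qed.

Lemma embeds_unit (K : Type) : embeds nat K -> embeds unit K.
Proof. by move=> [j _]; exists (fun=> j 0) => -[] []. Qed.

Lemma NEFunctor_iso_const (K K' : Type) : embeds nat K -> embeds (K' -> bool) K ->
  forall F : NEFunctor K K', NE_iso_const F.
Proof.
move=> jK pK F; pose U : NESet K :=
  {| ne_car := unit; ne_small := embeds_unit jK; ne_nonempty := inhabits tt |}.
exists (nef_obj F U), (fun X => nef_map F (fun=> tt : U)).
split=> [X|X Y f x]; last by rewrite -nef_comp.
case: (ne_nonempty X) => x0.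
exists (nef_map F (fun=> x0 : X)) => v; rewrite -nef_comp.
- exact: nef_map_const.
- exact: (@nef_map_const _ _ jK pK F U tt v).
Qed.

Lemma PtFunctor_iso_const (K K' : Type) : embeds nat K -> embeds (K' -> bool) K ->
  forall F : PtFunctor K K', Pt_iso_const F.
Proof.
move=> jK pK F; pose U : PtSet K :=
  {| pt_car := unit; pt_base := tt; pt_small := embeds_unit jK |}.
exists (pf_obj F U), (fun X => pf_map F (pt_const X U)).
split=> [X|X Y f x]; last first.
  by rewrite -pf_comp (_ : pt_comp _ _ = pt_const X U) //; apply: pt_hom_eq.
exists (sval (pf_map F (pt_const U X))) => v; rewrite -pf_comp.
- by rewrite (_ : pt_comp _ _ = pt_const X X) ?pf_map_const //; apply: pt_hom_eq.
- rewrite (_ : pt_comp _ _ = pt_const U U) ?pf_map_const //.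
  by apply/pt_hom_eq/funext => -[].
Qed.

Theorem proposition2p10 (K K' : Type)
  (hpow : exists i : (K' -> bool) -> K, injective i)   (* kappa >= 2^kappa' *)
  (hinf : exists j : nat -> K, injective j) :           (* kappa infinite *)
  (forall F : NEFunctor K K', NE_iso_const F) /\
  (forall F : PtFunctor K K', Pt_iso_const F).
Proof. by split; [exact: NEFunctor_iso_const|exact: PtFunctor_iso_const]. Qed.
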